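(* Let $G$ be an edge-colored graph of order $n\geq 2$. If $e(G)+c(G)=\binom{n+1}{2}-1$ and $G$ contains no rainbow triangle, then $G$ is complete and contains a vertex $u$ such that $d^s(u)=1$.
   Context: An edge-colored graph is a finite simple graph $G$ with a map $C:E(G)\to\mathbb{N}$. $e(G)=|E(G)|$, $c(G)$ is the number of distinct colors appearing on $E(G)$. A subgraph is rainbow if all its edges have distinct colors. For $v\in V(G)$, the color saturated degree is $d^s(v)=c(G)-c(G-v)$, i.e. the number of colors all of whose edges are incident to $v$. *)

From mathcomp Require Import all_boot.
Set Implicit Arguments. Unset Strict Implicit. Unset Printing Implicit Defensive.

(* An edge-colored finite simple graph on vertex type T:
   adjacency e (symmetric, irreflexive) and a colouring C of edges given as a
   symmetric function on pairs (its values on non-edges are irrelevant). *)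
Record ecgraph (T : finType) := ECGraph {
  adj : rel T;
  col : T -> T -> nat;
  adj_sym : symmetric adj;
  adj_irr : irreflexive adj;
  col_sym : forall x y, col x y = col y x
}.

Section Defs.
Variable T : finType.
Implicit Type G : ecgraph T.

Definition edges G : {set {set T}} :=
  [set E : {set T} | [exists x, exists y, adj G x y && (E == [set x; y])]].

Definition nedges G : nat := #|edges G|.

Definition colors_in G (A : {pred T}) : seq nat :=
  undup [seq col G p.1 p.2 | p <- enum [pred p : T * T |
           [&& adj G p.1 p.2, p.1 \in A & p.2 \in A]]].

Definition ncolors G : nat := size (colors_in G predT).

Definition ncolors_del G (v : T) : nat := size (colors_in G (predC1 v)).

Definition sat_deg G (v : T) : nat := ncolors G - ncolors_del G v.

Definition rainbow_triangle G (x y z : T) : Prop :=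
  [/\ adj G x y, adj G y z, adj G x z &
      [/\ col G x y != col G y z, col G x y != col G x z &
          col G y z != col G x z]].

Definition rainbow_triangle_free G : Prop :=
  forall x y z, ~ rainbow_triangle G x y z.

Definition complete G : Prop := forall x y : T, x != y -> adj G x y.
End Defs.

From mathcomp Require Import all_boot.
From mathcomp Require Import zify.
Set Implicit Arguments. Unset Strict Implicit. Unset Printing Implicit Defensive.

(* For a vertex set A write e(A), c(A) for the numbers of edges and colours
   inside A, and s_A(v) for the number of colours of A all of whose edges
   (within A) meet v.  Deleting v from A removes deg_A(v) edges and s_A(v)
   colours.  Without rainbow triangles, two edges vx, vy carrying distinct
   colours saturated at v force x and y to be non-adjacent; so if v maximises
   s_A and vx carries a colour saturated at v, then x has at least s_A(v) - 1
   non-neighbours in A, whence s_A(x) <= s_A(v) <= (|A| - 1 - deg_A(x)) + 1.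
   Deleting such an x and inducting gives e(A) + c(A) <= C(|A|+1, 2) - 1.
   In the equality case every estimate is tight: A - x is complete, so x has
   at most one saturated colour, hence no non-neighbour, and exactly one
   saturated colour. *)

Lemma binS2 n : 'C(n.+2, 2) = 'C(n.+1, 2) + n.+1.
Proof. by rewrite binS bin1. Qed.

Section Counting.
Variables (T : finType) (G : ecgraph T).
Local Notation adj := (adj G).
Local Notation col := (col G).
Implicit Types (A : {set T}) (v x y : T).

Definition nedges_in A := #|[set E in edges G | E \subset A]|.
Definition ncolors_in A := size (colors_in G (mem A)).
Definition sat_colors A v :=
  [seq a <- colors_in G (mem A) | a \notin colors_in G (mem (A :\ v))].
Definition nbhd v := [set x | adj v x].
Definition deg_in A v := #|(A :\ v) :&: nbhd v|.
Definition nondeg_in A v := #|(A :\ v) :\: nbhd v|.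
Definition clique A := {in A &, forall x y, x != y -> adj x y}.
Definition extremal A := (nedges_in A + ncolors_in A).+1 = 'C(#|A|.+1, 2).

Lemma adj_neq x y : adj x y -> x != y.
Proof. by apply: contraTneq => ->; rewrite adj_irr. Qed.

Lemma colors_inP (A : {pred T}) a :
  reflect (exists x y, [/\ adj x y, x \in A, y \in A & col x y = a])
          (a \in colors_in G A).
Proof.
rewrite /colors_in mem_undup; apply: (iffP mapP) => [[[x y]]|[x [y [xy xA yA <-]]]].
  by rewrite mem_enum inE /= => /and3P[xy xA yA] ->; exists x, y.
by exists (x, y); rewrite // mem_enum inE /= xy xA yA.
Qed.

Lemma eq_colors_in (A B : {pred T}) : A =i B -> colors_in G A = colors_in G B.
Proof.
by move=> eAB; congr (undup (map _ _)); apply: eq_enum => p; rewrite !inE /= !eAB.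
Qed.

Lemma sub_colors_in (A B : {pred T}) :
  {subset A <= B} -> {subset colors_in G A <= colors_in G B}.
Proof.
move=> sAB a /colors_inP[x [y [xy xA yA <-]]].
by apply/colors_inP; exists x, y; split; rewrite ?sAB.
Qed.

Lemma sat_colors_uniq A v : uniq (sat_colors A v).
Proof. exact/filter_uniq/undup_uniq. Qed.

Lemma sat_colors_witness A v a : a \in sat_colors A v ->
  exists x, [/\ x \in A, adj v x & col v x = a].
Proof.
rewrite mem_filter => /andP[aNAv /colors_inP[x [y [xy xA yA ea]]]]; subst a.
have [exv|xv] := eqVneq x v; first by subst x; exists y.
have [eyv|yv] := eqVneq y v; first by subst y; exists x; rewrite adj_sym col_sym.
by case/negP: aNAv; apply/colors_inP; exists x, y; split; rewrite ?inE ?xv ?yv.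
Qed.

Lemma ncolors_in_D1 A v :
  ncolors_in A = ncolors_in (A :\ v) + size (sat_colors A v).
Proof.
rewrite /ncolors_in /sat_colors size_filter.
set s := colors_in G _; set t := colors_in G _.
have sub_ts : {subset t <= s} by apply: sub_colors_in => x /setD1P[].
rewrite -(count_predC (mem t) s) -size_filter; congr (_ + _).
apply/perm_size/uniq_perm; rewrite ?filter_uniq ?undup_uniq // => a.
by rewrite mem_filter; apply/andP/idP => [[]//|ta]; split; rewrite /= ?ta ?sub_ts.
Qed.

Lemma nedges_in_setT : nedges_in [set: T] = nedges G.
Proof. by apply: eq_card => E; rewrite !inE subsetT andbT. Qed.

Lemma ncolors_in_setT : ncolors_in [set: T] = ncolors G.
Proof. by congr size; apply: eq_colors_in => x; rewrite in_setT. Qed.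

Lemma ncolors_in_setT1 v : ncolors_in ([set: T] :\ v) = ncolors_del G v.
Proof. by congr size; apply: eq_colors_in => x; rewrite !inE andbT. Qed.

Lemma sat_deg_sat_colors v : sat_deg G v = size (sat_colors [set: T] v).
Proof. by rewrite /sat_deg -ncolors_in_setT -ncolors_in_setT1 (ncolors_in_D1 _ v) addKn. Qed.

Lemma mem_edges x y : adj x y -> [set x; y] \in edges G.
Proof.
by move=> xy; rewrite inE; apply/existsP; exists x; apply/existsP; exists y; rewrite xy /=.
Qed.

Lemma edges_at E v : E \in edges G -> v \in E -> exists2 x, adj v x & E = [set v; x].
Proof.
rewrite inE => /existsP[a /existsP[b /andP[ab /eqP->]]] /set2P[]->; first by exists b.
by exists a; rewrite 1?adj_sym 1?setUC.
Qed.

Lemma nedges_in_D1 A v : v \in A -> nedges_in A = nedges_in (A :\ v) + deg_in A v.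
Proof.
move=> vA; rewrite /nedges_in -(cardsID [set E : {set T} | v \in E]) addnC; congr (_ + _).
  by apply: eq_card => E; rewrite !inE subsetD1 andbC andbA.
have inj : {in (A :\ v) :&: nbhd v &, injective (fun x => [set v; x])}.
  move=> x y; rewrite !inE => /andP[/andP[xv _] _] _ exy.
  have /set2P[/eqP|//] : x \in [set v; y] by rewrite -exy set22.
  by rewrite (negbTE xv).
rewrite /deg_in -(card_in_imset inj); apply: eq_card => E.
apply/idP/imsetP => [/setIP[/setIdP[EG sEA]]|[x]].
  rewrite inE => vE; have [x vx defE] := edges_at EG vE; exists x => //.
  by rewrite !inE eq_sym adj_neq // vx (subsetP sEA) // defE set22.
move=> /setIP[/setD1P[_ xA]]; rewrite inE => vx ->.
apply/setIP; split; last by rewrite inE set21.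
by apply/setIdP; rewrite mem_edges // subUset !sub1set vA xA.
Qed.

Lemma nedges_ncolors_in_D1 A v : v \in A ->
  nedges_in A + ncolors_in A =
  nedges_in (A :\ v) + ncolors_in (A :\ v) + deg_in A v + size (sat_colors A v).
Proof. by move=> vA; rewrite (nedges_in_D1 vA) (ncolors_in_D1 A v); lia. Qed.

Lemma deg_in_add_nondeg A v : v \in A -> deg_in A v + nondeg_in A v = #|A|.-1.
Proof. by move=> vA; rewrite /deg_in /nondeg_in cardsID (cardsD1 v A) vA. Qed.

Lemma nondeg_in_eq0P A v : reflect {in A :\ v, forall x, adj v x} (nondeg_in A v == 0).
Proof. by rewrite cards_eq0 setD_eq0; apply: (iffP subsetP) => h x /h; rewrite inE. Qed.

Lemma nedges_in_set1 a : nedges_in [set a] = 0.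
Proof.
apply/eqP; rewrite cards_eq0; apply/eqP/setP => E; rewrite !inE.
apply/negbTE/andP => -[/existsP[x /existsP[y /andP[xy /eqP->]]]].
by rewrite subUset !sub1set !inE => /andP[/eqP ex /eqP ey]; rewrite ex ey adj_irr in xy.
Qed.

Lemma ncolors_in_set1 a : ncolors_in [set a] = 0.
Proof.
rewrite /ncolors_in; case Ea: colors_in => [|c s] //.
have /colors_inP[x [y [xy /set1P ex /set1P ey _]]] : c \in colors_in G (mem [set a]).
  by rewrite Ea mem_head.
by rewrite ex ey adj_irr in xy.
Qed.

End Counting.

Section RainbowTriangleFree.
Variables (T : finType) (G : ecgraph T).
Hypothesis rtf : rainbow_triangle_free G.
Local Notation adj := (adj G).
Local Notation col := (col G).
Local Notation sat_colors := (sat_colors G).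
Local Notation nondeg_in := (nondeg_in G).
Local Notation nedges_in := (nedges_in G).
Local Notation ncolors_in := (ncolors_in G).
Local Notation extremal := (extremal G).
Implicit Types (A : {set T}) (v x y : T).

Lemma sat_colors_nonadj A v x y : x \in A -> y \in A -> adj v x -> adj v y ->
  col v x \in sat_colors A v -> col v y \in sat_colors A v -> col v x != col v y ->
  ~~ adj x y.
Proof.
move=> xA yA vx vy sx sy nxy; apply/negP => xy.
have cxy : col x y \in colors_in G (mem (A :\ v)).
  by apply/colors_inP; exists x, y; rewrite !inE ![_ == v]eq_sym (adj_neq vx) (adj_neq vy).
apply: (rtf (And4 vx xy vy (And3 _ nxy _))).
  by apply: contraTneq sx => ->; rewrite mem_filter cxy.
by apply: contraTneq sy => <-; rewrite mem_filter cxy.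
Qed.

Lemma size_sat_colors_le_nondeg A v x : x \in A -> adj v x ->
  col v x \in sat_colors A v -> (size (sat_colors A v)).-1 <= nondeg_in A x.
Proof.
move=> xA vx sx.
set B := [set y in A | adj v y && (col v y \in sat_colors A v) && (col v y != col v x)].
apply: (@leq_trans #|B|).
  rewrite -(size_rem sx) cardE -(size_map (col v)).
  apply: uniq_leq_size; first exact/rem_uniq/sat_colors_uniq.
  move=> b; rewrite mem_rem_uniq ?sat_colors_uniq // inE => /andP[bx sb].
  have [y [yA vy eb]] := sat_colors_witness sb; subst b.
  by apply: map_f; rewrite mem_enum !inE yA vy sb bx.
apply/subset_leq_card/subsetP => y; rewrite !inE => /andP[yA /andP[/andP[vy sy] yx]].
have nxy : col v x != col v y by rewrite eq_sym.
rewrite yA andbT (sat_colors_nonadj xA yA vx vy sx sy nxy) /=.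
by apply: contraNneq yx => ->.
Qed.

Lemma exists_sat_colors_le_nondeg A v0 : v0 \in A ->
  exists2 v, v \in A & size (sat_colors A v) <= (nondeg_in A v).+1.
Proof.
move=> v0A; have [v vA maxv] := @arg_maxnP _ v0 (mem A) (fun v => size (sat_colors A v)) v0A.
case Sv: (sat_colors A v) => [|a s]; first by exists v => //; rewrite Sv.
have sa : a \in sat_colors A v by rewrite Sv mem_head.
have [x [xA vx cx]] := sat_colors_witness sa; exists x => //.
have := size_sat_colors_le_nondeg xA vx; rewrite cx sa Sv => /(_ isT).
have := maxv x xA; rewrite Sv /=; lia.
Qed.

Lemma sat_colors_clique A v : clique G (A :\ v) -> size (sat_colors A v) <= 1.
Proof.
move=> clAv; case Sv: (sat_colors A v) (sat_colors_uniq G A v) => [|a [|b s]] //=.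
rewrite inE negb_or => /andP[/andP[ab _] _].
have sa : a \in sat_colors A v by rewrite Sv mem_head.
have sb : b \in sat_colors A v by rewrite Sv !inE eqxx orbT.
have [x [xA vx ea]] := sat_colors_witness sa.
have [y [yA vy eb]] := sat_colors_witness sb.
subst a b; case/negP: (sat_colors_nonadj xA yA vx vy sa sb ab).
apply: clAv; last by apply: contraNneq ab => ->.
  by rewrite !inE eq_sym (adj_neq vx).
by rewrite !inE eq_sym (adj_neq vy).
Qed.

Lemma nedges_ncolors_in_lt A : 0 < #|A| -> nedges_in A + ncolors_in A < 'C(#|A|.+1, 2).
Proof.
have [n] := ubnP #|A|; elim: n A => // n IH A /ltnSE leAn A_gt0.
have [A_gt1|A_le1] := ltnP 1 #|A|; last first.
  have /cards1P[a ->] : #|A| == 1 by rewrite eqn_leq A_le1.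
  by rewrite nedges_in_set1 ncolors_in_set1 cards1.
have /card_gt0P[v0 v0A] := A_gt0.
have [v vA Sle] := exists_sat_colors_le_nondeg v0A.
have cardA : #|A| = #|A :\ v|.+1 by rewrite (cardsD1 v A) vA.
have IHv := IH (A :\ v) (leq_trans (proper_card (properD1 vA)) leAn).
have := deg_in_add_nondeg G vA; rewrite cardA in A_gt1 *.
rewrite (nedges_ncolors_in_D1 G vA) binS2; lia.
Qed.

Lemma extremal_D1 A v : v \in A -> 1 < #|A| -> extremal A ->
  size (sat_colors A v) <= (nondeg_in A v).+1 ->
  extremal (A :\ v) /\ size (sat_colors A v) = (nondeg_in A v).+1.
Proof.
move=> vA A_gt1; have cardA : #|A| = #|A :\ v|.+1 by rewrite (cardsD1 v A) vA.
have := @nedges_ncolors_in_lt (A :\ v); have := deg_in_add_nondeg G vA.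
rewrite /extremal (nedges_ncolors_in_D1 G vA) cardA binS2 in A_gt1 *; lia.
Qed.

Lemma extremal_clique A : extremal A -> clique G A.
Proof.
have [n] := ubnP #|A|; elim: n A => // n IH A /ltnSE leAn extA.
have [A_gt1|A_le1] := ltnP 1 #|A|; last first.
  by move=> x y xA yA; have /card_le1_eqP/(_ x y xA yA)-> := A_le1; rewrite eqxx.
have /card_gt0P[v0 v0A] := ltnW A_gt1.
have [v vA Sle] := exists_sat_colors_le_nondeg v0A.
have [extAv Sv] := extremal_D1 vA A_gt1 extA Sle.
have clAv := IH (A :\ v) (leq_trans (proper_card (properD1 vA)) leAn) extAv.
have /nondeg_in_eq0P adjv : nondeg_in A v == 0.
  by have := sat_colors_clique clAv; rewrite Sv ltnS leqn0.
move=> x y xA yA.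
have [-> vy|xv] := eqVneq x v; first by apply: adjv; rewrite !inE eq_sym vy yA.
have [-> _|yv xy] := eqVneq y v; first by rewrite adj_sym; apply: adjv; rewrite !inE xv xA.
by apply: clAv; rewrite ?inE ?xv ?yv.
Qed.

End RainbowTriangleFree.

Theorem lemma2 (T : finType) (G : ecgraph T) :
  2 <= #|T| ->
  nedges G + ncolors G = 'C(#|T|.+1, 2) - 1 ->
  rainbow_triangle_free G ->
  complete G /\ exists u : T, sat_deg G u = 1.
Proof.
move=> T_gt1 eGcG rtf; rewrite -cardsT in T_gt1 eGcG.
have extT : extremal G [set: T].
  have C_gt0 : 0 < 'C(#|[set: T]|.+1, 2) by rewrite bin_gt0 ltnS ltnW.
  by rewrite /extremal nedges_in_setT ncolors_in_setT eGcG; lia.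
have compG : complete G by move=> x y; apply: (extremal_clique rtf extT); rewrite in_setT.
split=> //.
have /card_gt0P[x0 x0T] := ltnW T_gt1.
have [u _ Sle] := exists_sat_colors_le_nondeg rtf x0T.
exists u; rewrite sat_deg_sat_colors.
have [_ ->] := extremal_D1 rtf (in_setT u) T_gt1 extT Sle.
suff /eqP-> : nondeg_in G [set: T] u == 0 by [].
by apply/nondeg_in_eq0P => x /setD1P[xu _]; apply: compG; rewrite eq_sym.
Qed.
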